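(* Let $q>1$, let $\Omega\subset\mathbb R^N$ be a domain, and let $u\in C^{2,1}(\Omega\times(0,\infty))$ be a large initial solution of $\partial_tu-\Delta u+u^q=0$ in $\Omega\times(0,\infty)$. Then for every bounded open set $G$ with $\overline G\subset\Omega$, $$\lim_{t\to0}t^{1/(q-1)}u(x,t)=c_q:=\Big(\frac1{q-1}\Big)^{1/(q-1)}\quad\text{uniformly in }x\in G.$$
   Context: A large initial solution is a positive function $u\in C^{2,1}(\Omega\times(0,\infty))$ solving $\partial_tu-\Delta u+u^q=0$ in $\Omega\times(0,\infty)$ such that $\lim_{t\to0}u(x,t)=\infty$ uniformly on every compact subset of $\Omega$. *)

From Stdlib Require Import Reals List.
From mathcomp Require Import ssreflect ssrbool eqtype ssrnat fintype.
Open Scope R_scope.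

Definition point (N : nat) := 'I_N -> R.

Definition sqdist {N : nat} (x y : point N) : R :=
  fold_right Rplus 0 (map (fun i => (x i - y i)^2) (enum 'I_N)).
Definition dist {N : nat} (x y : point N) : R := sqrt (sqdist x y).

Definition is_open {N} (S : point N -> Prop) : Prop :=
  forall x, S x -> exists r, r > 0 /\ forall y, dist x y < r -> S y.
Definition is_connected {N} (S : point N -> Prop) : Prop :=
  forall U V : point N -> Prop, is_open U -> is_open V ->
    (forall x, S x -> U x \/ V x) ->
    (forall x, S x -> U x -> V x -> False) ->
    (forall x, S x -> ~ U x) \/ (forall x, S x -> ~ V x).
Definition is_domain {N} (S : point N -> Prop) : Prop :=
  (exists x, S x) /\ is_open S /\ is_connected S.
Definition is_bounded {N} (S : point N -> Prop) : Prop :=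
  exists x0 M, forall x, S x -> dist x0 x <= M.
Definition closure {N} (S : point N -> Prop) : point N -> Prop :=
  fun x => forall eps, eps > 0 -> exists y, S y /\ dist x y < eps.
Definition is_closed {N} (S : point N -> Prop) : Prop :=
  forall x, closure S x -> S x.
(* compact subsets of R^N (Heine-Borel) *)
Definition is_compact {N} (K : point N -> Prop) : Prop :=
  is_closed K /\ is_bounded K.

Definition upd {N} (x : point N) (i : 'I_N) (s : R) : point N :=
  fun j => if j == i then s else x j.

Definition cont_on {N} (Omega : point N -> Prop) (f : point N -> R -> R) : Prop :=
  forall x t, Omega x -> 0 < t ->
  forall eps, eps > 0 -> exists delta, delta > 0 /\
    forall y s, Omega y -> 0 < s -> dist x y < delta -> Rabs (s - t) < delta ->
      Rabs (f y s - f x t) < eps.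

Definition C21_with {N} (Omega : point N -> Prop) (u : point N -> R -> R)
  (Du : 'I_N -> point N -> R -> R) (D2u : 'I_N -> 'I_N -> point N -> R -> R)
  (Dtu : point N -> R -> R) : Prop :=
  (forall x t, Omega x -> 0 < t ->
     (forall i, derivable_pt_lim (fun s => u (upd x i s) t) (x i) (Du i x t)) /\
     (forall i j, derivable_pt_lim (fun s => Du i (upd x j s) t) (x j) (D2u i j x t)) /\
     derivable_pt_lim (fun s => u x s) t (Dtu x t)) /\
  cont_on Omega u /\ (forall i, cont_on Omega (Du i)) /\
  (forall i j, cont_on Omega (D2u i j)) /\ cont_on Omega Dtu.

Definition laplacian_of {N} (D2u : 'I_N -> 'I_N -> point N -> R -> R)
  (x : point N) (t : R) : R :=
  fold_right Rplus 0 (map (fun i => D2u i i x t) (enum 'I_N)).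

Definition pos_solution {N} (q : R) (Omega : point N -> Prop) (u : point N -> R -> R) : Prop :=
  (forall x t, Omega x -> 0 < t -> 0 < u x t) /\
  exists Du D2u Dtu, C21_with Omega u Du D2u Dtu /\
    forall x t, Omega x -> 0 < t ->
      Dtu x t - laplacian_of D2u x t + Rpower (u x t) q = 0.

Definition large_initial_solution {N} (q : R) (Omega : point N -> Prop)
  (u : point N -> R -> R) : Prop :=
  pos_solution q Omega u /\
  forall K : point N -> Prop, is_compact K -> (forall x, K x -> Omega x) ->
    forall M, exists delta, delta > 0 /\
      forall x t, K x -> 0 < t < delta -> M < u x t.

Definition c_q (q : R) : R := Rpower (1 / (q - 1)) (1 / (q - 1)).

(* With a = 1/(q-1), the function psi(T) = c_q T^(-a) solves psi' + psi^q = 0, and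
   t^a psi(k t) = c_q k^(-a).  Around a point x0 whose closed ball B(x0, R) lies in
   Omega, u is squeezed between two explicit barriers by the parabolic comparison
   principle on small cylinders:
   - above by W = psi(s - th t) + lam (R^2 - |x - x0|^2)^(-2a), a supersolution which
     is infinite on the parabolic boundary of B(x0, R) x (th t, t), so that
     t^a u(x0, t) <= c_q (1 - th)^(-a) + O(t^a);
   - below by z = lam psi(s + sg t) - K |x - x0|^2 with lam < 1, a subsolution which
     is nonpositive on the lateral boundary of a ball of radius O(sqrt t) and lies
     below u at small times because u is large there, so that
     t^a u(x0, t) >= lam c_q (1 + sg)^(-a).
   Letting th, sg -> 0 and lam -> 1 gives the limit; a Lebesgue-number argument
   makes R uniform over G. *)

From Pilot Require Import Defs.
From Stdlib Require Import Reals Lra Psatz List FunctionalExtensionality Classical ClassicalEpsilon.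
From mathcomp Require Import ssreflect ssrbool eqtype ssrnat seq fintype.
Open Scope R_scope.
(* [dist] is the Euclidean distance of Defs, not Stdlib's metric-space field. *)
Local Notation dist := Pilot.Defs.dist.

Definition lsum {T : Type} (l : list T) (f : T -> R) : R := fold_right Rplus 0 (map f l).

Section ListSums.
Context {T : Type}.
Implicit Types (l : list T) (f g : T -> R) (i : T).

Lemma lsum_nil f : lsum nil f = 0. Proof. by []. Qed.
Lemma lsum_cons a l f : lsum (a :: l) f = f a + lsum l f. Proof. by []. Qed.

Lemma lsum_nonneg l f : (forall i, 0 <= f i) -> 0 <= lsum l f.
Proof. move=> Hf; elim: l => [|a l IH]; rewrite ?lsum_nil ?lsum_cons; [lra | have := Hf a; lra]. Qed.

Lemma lsum_le l f g : (forall i, f i <= g i) -> lsum l f <= lsum l g.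
Proof. move=> Hfg; elim: l => [|a l IH]; rewrite ?lsum_nil ?lsum_cons; [lra | have := Hfg a; lra]. Qed.

Lemma lsum_ext l f g : (forall i, f i = g i) -> lsum l f = lsum l g.
Proof. move=> Hfg; elim: l => [|a l IH] //; by rewrite !lsum_cons Hfg IH. Qed.

Lemma lsum_plus l f g : lsum l (fun i => f i + g i) = lsum l f + lsum l g.
Proof. elim: l => [|a l IH]; rewrite ?lsum_nil ?lsum_cons; [lra | rewrite IH; lra]. Qed.

Lemma lsum_scal l c f : lsum l (fun i => c * f i) = c * lsum l f.
Proof. elim: l => [|a l IH]; rewrite ?lsum_nil ?lsum_cons; [lra | rewrite IH; lra]. Qed.

Lemma lsum_const l c : lsum l (fun _ => c) = INR (length l) * c.
Proof.
  elim: l => [|a l IH]; rewrite ?lsum_nil ?lsum_cons; first by rewrite /=; lra.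
  rewrite [length _]/= S_INR IH; lra.
Qed.
End ListSums.

Section ListSumsMem.
Context {T : eqType}.
Implicit Types (l : list T) (f g : T -> R) (i : T).

Lemma lsum_term l f i : (forall j, 0 <= f j) -> i \in l -> f i <= lsum l f.
Proof.
  move=> Hf; elim: l => [|a l IH] //; rewrite lsum_cons in_cons => /orP [/eqP -> | Hi].
  - have := lsum_nonneg l f Hf; lra.
  - have := IH Hi; have := Hf a; lra.
Qed.

Lemma lsum_ext_in l f g : (forall i, i \in l -> f i = g i) -> lsum l f = lsum l g.
Proof.
  elim: l => [|a l IH] // Hfg.
  rewrite !lsum_cons Hfg ?mem_head // IH // => j Hj; apply: Hfg; by rewrite in_cons Hj orbT.
Qed.

Lemma lsum_upd l f f' i : uniq l -> i \in l -> (forall j, j != i -> f' j = f j) ->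
  lsum l f' = lsum l f - f i + f' i.
Proof.
  move=> + + Hf; elim: l => [|a l IH] //= /andP [Ha Hu]; rewrite !lsum_cons.
  rewrite in_cons => /orP [/eqP Eia | Hi].
  - subst a; rewrite (lsum_ext_in l f' f); [lra | move=> j Hj].
    apply: Hf; apply/negP => /eqP Eji; subst j; by rewrite Hj in Ha.
  - rewrite IH // Hf; [lra | apply/negP => /eqP Eai; subst a; by rewrite Hi in Ha].
Qed.
End ListSumsMem.

(* One induction step of Cauchy-Schwarz. *)
Lemma cauchy_schwarz_step X A B a b : 0 <= A -> 0 <= B -> X^2 <= A * B ->
  (a * b + X)^2 <= (a^2 + A) * (b^2 + B).
Proof.
  move=> HA HB HX.
  suff Hm : 2 * X * (a * b) <= A * b^2 + B * a^2 by nra.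
  case: (Rle_lt_dec (2 * X * (a * b)) (A * b^2 + B * a^2)) => [//|Hlt].
  have Hs : 0 <= A * b^2 + B * a^2 by nra.
  have Hsq := pow2_ge_0 (A * b^2 - B * a^2).
  have Hab := pow2_ge_0 (a * b).
  have H1 : X^2 * (a * b)^2 <= A * B * (a * b)^2 by apply Rmult_le_compat_r.
  have : (A * b^2 + B * a^2) * (A * b^2 + B * a^2) < (2 * X * (a * b)) * (2 * X * (a * b)) by nra.
  nra.
Qed.

Lemma cauchy_schwarz {T : Type} (l : list T) (f g : T -> R) :
  (lsum l (fun i => f i * g i))^2 <= lsum l (fun i => f i ^ 2) * lsum l (fun i => g i ^ 2).
Proof.
  elim: l => [|a l IH]; rewrite ?lsum_nil ?lsum_cons; first by rewrite /=; lra.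
  apply: cauchy_schwarz_step IH; apply: lsum_nonneg => i; apply: pow2_ge_0.
Qed.

Section Euclid.
Variable N : nat.
Implicit Types (x y z : point N) (i j : 'I_N).

Lemma sqdist_lsum x y : sqdist x y = lsum (enum 'I_N) (fun i => (x i - y i)^2).
Proof. by []. Qed.

Lemma sqdist_nonneg x y : 0 <= sqdist x y.
Proof. rewrite sqdist_lsum; apply: lsum_nonneg => i; apply: pow2_ge_0. Qed.

Lemma dist_nonneg x y : 0 <= dist x y.
Proof. exact: sqrt_pos. Qed.

Lemma dist_sq x y : dist x y ^ 2 = sqdist x y.
Proof. by rewrite /dist /= Rmult_1_r sqrt_sqrt //; apply: sqdist_nonneg. Qed.

Lemma sqdist_sym x y : sqdist x y = sqdist y x.
Proof. rewrite !sqdist_lsum; apply: lsum_ext => i; ring. Qed.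

Lemma dist_sym x y : dist x y = dist y x.
Proof. by rewrite /dist sqdist_sym. Qed.

Lemma sqdist_refl x : sqdist x x = 0.
Proof.
  rewrite sqdist_lsum (lsum_ext _ _ (fun _ => 0)) ?lsum_const; [ring | move=> i; ring].
Qed.

Lemma dist_refl x : dist x x = 0.
Proof. by rewrite /dist sqdist_refl sqrt_0. Qed.

Lemma sqdist_le_of_dist x y r : dist x y <= r -> sqdist y x <= r * r.
Proof. move=> h; rewrite sqdist_sym -dist_sq; have := dist_nonneg x y; simpl; nra. Qed.

Lemma sqdist_eq_of_dist x y r : dist x y = r -> sqdist y x = r * r.
Proof. by move=> h; rewrite sqdist_sym -dist_sq h /=; ring. Qed.

Lemma coord_le x y i : Rabs (x i - y i) <= dist x y.
Proof.
  rewrite /dist -sqrt_Rsqr_abs; apply: sqrt_le_1_alt.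
  have : (x i - y i)^2 <= sqdist x y.
    by rewrite sqdist_lsum; apply: (lsum_term _ (fun j => (x j - y j)^2)) => [j|];
      [apply: pow2_ge_0 | rewrite mem_enum].
  rewrite /Rsqr /=; lra.
Qed.

(* Triangle inequality, via Cauchy-Schwarz. *)
Lemma dist_triang x y z : dist x z <= dist x y + dist y z.
Proof.
  pose S := lsum (enum 'I_N) (fun i => (x i - y i) * (y i - z i)).
  have Hexp : sqdist x z = sqdist x y + 2 * S + sqdist y z.
    by rewrite !sqdist_lsum /S -lsum_scal -!lsum_plus; apply: lsum_ext => i; ring.
  have HS : S <= dist x y * dist y z.
  { apply: Rsqr_incr_0_var; last by apply: Rmult_le_pos; apply: dist_nonneg.
    have := cauchy_schwarz (enum 'I_N) (fun i => x i - y i) (fun i => y i - z i).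
    rewrite -!sqdist_lsum -!dist_sq -/S /Rsqr /=; lra. }
  apply: Rsqr_incr_0_var; last by apply: Rplus_le_le_0_compat; apply: dist_nonneg.
  rewrite /Rsqr; have := dist_sq x z; have := dist_sq x y; have := dist_sq y z; simpl; nra.
Qed.

Lemma upd_same x i s : upd x i s i = s.
Proof. by rewrite /upd eqxx. Qed.

Lemma upd_other x i j s : j != i -> upd x i s j = x j.
Proof. by rewrite /upd => /negbTE ->. Qed.

Lemma upd_upd x i s s' : upd (upd x i s) i s' = upd x i s'.
Proof. apply: functional_extensionality => j; rewrite /upd; by case: (j == i). Qed.

Lemma upd_id x i : upd x i (x i) = x.
Proof. apply: functional_extensionality => j; rewrite /upd; by case: (boolP (j == i)) => [/eqP ->|]. Qed.

Lemma sqdist_upd x y i s : sqdist (upd x i s) y = sqdist x y - (x i - y i)^2 + (s - y i)^2.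
Proof.
  rewrite !sqdist_lsum (lsum_upd _ (fun j => (x j - y j)^2) _ i) ?upd_same //.
  - exact: enum_uniq.
  - by rewrite mem_enum.
  - by move=> j Hj; rewrite upd_other.
Qed.

Lemma dist_upd x i s : dist x (upd x i s) = Rabs (s - x i).
Proof.
  rewrite /dist sqdist_sym sqdist_upd sqdist_refl -sqrt_Rsqr_abs /Rsqr /=; f_equal; ring.
Qed.
End Euclid.

(* Index maps of subsequences. *)
Definition strict (phi : nat -> nat) : Prop := forall n, (phi n < phi (S n))%coq_nat.

Lemma strict_ge phi : strict phi -> forall n, (n <= phi n)%coq_nat.
Proof. move=> H; elim=> [|n IH]; [lia | have := H n; lia]. Qed.

Lemma strict_comp phi psi : strict phi -> strict psi -> strict (fun n => phi (psi n)).
Proof.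
  move=> Hphi Hpsi n.
  have mono : forall m k, (m <= k)%coq_nat -> (phi m <= phi k)%coq_nat.
  { move=> m k; elim=> [|k' _ IH]; [lia | have := Hphi k'; lia]. }
  have := mono _ _ (Hpsi n); have := Hphi (psi n); lia.
Qed.

Lemma cv_subseq u l phi : Un_cv u l -> strict phi -> Un_cv (fun n => u (phi n)) l.
Proof.
  move=> Hu Hphi eps He; case: (Hu eps He) => n0 Hn0; exists n0 => n Hn.
  apply: Hn0; have := strict_ge phi Hphi n; rewrite /ge in Hn *; lia.
Qed.

Lemma small_inv eps : 0 < eps -> exists n0, forall n, (n0 <= n)%coq_nat -> / (INR n + 1) < eps.
Proof.
  move=> He; case: (archimed_cor1 eps He) => n0 [H1 H2]; exists n0 => n Hn.
  have h1 : 0 < INR n0 by apply: lt_0_INR.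
  have h2 : INR n0 <= INR n by apply: le_INR.
  apply: (Rle_lt_trans _ (/ INR n0)) => //; apply: Rinv_le_contravar; lra.
Qed.

(* Diagonal index: [F k n] is an index past [n] at which the sequence is
   [1/(k+1)]-close to the cluster point. *)
Fixpoint diag_index (F : nat -> nat -> nat) (n : nat) : nat :=
  match n with O => F O O | S m => F (S m) (S (diag_index F m)) end.

Lemma bolzano_weierstrass_subseq (a : nat -> R) M : (forall n, Rabs (a n) <= M) ->
  exists phi l, strict phi /\ Un_cv (fun n => a (phi n)) l.
Proof.
  move=> Ha.
  case: (Bolzano_Weierstrass a (fun c => -M <= c <= M) (compact_P3 _ _)) => [n|l Hl].
    by have := Ha n; have := Rle_abs (a n); have := Rle_abs (- a n); rewrite Rabs_Ropp; lra.
  have Hclose : forall kn : nat * nat,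
      exists p, (snd kn <= p)%coq_nat /\ Rabs (a p - l) < / (INR (fst kn) + 1).
  { move=> [k n] /=.
    have hp : 0 < / (INR k + 1) by apply: Rinv_0_lt_compat; have := pos_INR k; lra.
    case: (Hl (disc l (mkposreal _ hp)) n) => [|p [Hp Hd]]; first by exists (mkposreal _ hp).
    by exists p. }
  case: (choice _ Hclose) => F HF.
  pose G k n := F (k, n).
  exists (diag_index G), l; split.
  - move=> n; have := proj1 (HF (S n, S (diag_index G n))); rewrite /= /G; lia.
  - move=> eps He; case: (small_inv eps He) => n0 Hn0; exists n0 => n Hn.
    have E : Rabs (a (diag_index G n) - l) < / (INR n + 1).
      by case: n {Hn} => [|n]; [exact: (proj2 (HF (O, O))) | exact: (proj2 (HF (S n, _)))].
    apply: (Rlt_trans _ _ _ E); apply: Hn0; rewrite /ge in Hn; lia.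
Qed.

Lemma bolzano_weierstrass_fin (I : finType) (a : I -> nat -> R) :
  (forall i, exists M, forall n, Rabs (a i n) <= M) ->
  exists phi, strict phi /\ forall i, exists l, Un_cv (fun n => a i (phi n)) l.
Proof.
  move=> Ha.
  suff [phi [Hphi Hcv]] : exists phi, strict phi /\
      forall i, i \in enum I -> exists l, Un_cv (fun n => a i (phi n)) l.
    by exists phi; split=> // i; apply: Hcv; rewrite mem_enum.
  elim: (enum I) => [|j L [phi [Hphi Hcv]]]; first by exists (fun n => n); split => // n; lia.
  case: (Ha j) => M HM.
  case: (bolzano_weierstrass_subseq (fun n => a j (phi n)) M) => [n|psi [l [Hpsi Hl]]]; first exact: HM.
  exists (fun n => phi (psi n)); split; first exact: strict_comp.
  move=> i; rewrite in_cons => /orP [/eqP -> | Hi]; first by exists l.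
  case: (Hcv i Hi) => l' Hl'; exists l'; exact: (cv_subseq (fun n => a i (phi n))).
Qed.

Lemma cv_sq_dev (u : nat -> R) l : Un_cv u l -> Un_cv (fun n => (u n - l)^2) 0.
Proof.
  move=> H eps He; case: (H (Rmin 1 eps)) => [|n0 Hn0]; first by apply: Rmin_pos; lra.
  exists n0 => n Hn; have := Hn0 n Hn; rewrite /Rdist Rminus_0_r => h.
  rewrite Rabs_pos_eq; last exact: pow2_ge_0.
  rewrite -pow2_abs.
  have := Rmin_l 1 eps; have := Rmin_r 1 eps; have := Rabs_pos (u n - l); simpl; nra.
Qed.

Lemma lsum_cv0 (T : Type) (l : list T) (g : T -> nat -> R) :
  (forall i, Un_cv (g i) 0) -> Un_cv (fun n => lsum l (fun i => g i n)) 0.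
Proof.
  move=> H; elim: l => [|a l IH].
  - move=> eps He; exists O => n _; rewrite /Rdist lsum_nil Rminus_0_r Rabs_R0; lra.
  - have := CV_plus _ _ _ _ (H a) IH; rewrite Rplus_0_r; exact.
Qed.

Lemma cv_coords N (xs : nat -> point N) (x : point N) :
  (forall i, Un_cv (fun n => xs n i) (x i)) -> Un_cv (fun n => dist (xs n) x) 0.
Proof.
  move=> H eps He.
  have Hsq : Un_cv (fun n => sqdist (xs n) x) 0.
    by apply: (lsum_cv0 _ _ (fun i n => (xs n i - x i)^2)) => i; apply: cv_sq_dev.
  case: (Hsq (eps^2)) => [|n0 Hn0]; first by simpl; nra.
  exists n0 => n Hn; have := Hn0 n Hn.
  rewrite /Rdist !Rminus_0_r (Rabs_pos_eq _ (sqdist_nonneg _ _ _)) (Rabs_pos_eq _ (dist_nonneg _ _ _)) => h.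
  rewrite /dist -(sqrt_pow2 eps); last lra.
  apply: sqrt_lt_1_alt; split; [exact: sqdist_nonneg | exact: h].
Qed.

Definition cluster {N} (xs : nat -> point N) (ss : nat -> R) (x : point N) (s : R) : Prop :=
  forall eps n0, eps > 0 -> exists n, (n0 <= n)%coq_nat /\ dist (xs n) x < eps /\ Rabs (ss n - s) < eps.

Lemma bounded_cluster N (x0 : point N) M a b (xs : nat -> point N) (ss : nat -> R) :
  (forall n, dist x0 (xs n) <= M) -> (forall n, a <= ss n <= b) ->
  exists x s, cluster xs ss x s.
Proof.
  move=> Hx Hs.
  pose seqs (o : option 'I_N) n := if o is Some i then xs n i else ss n.
  case: (bolzano_weierstrass_fin _ seqs) => [[i|]|phi [Hphi Hcv]].
  - exists (Rabs (x0 i) + M) => n /=.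
    have := coord_le _ (xs n) x0 i; rewrite dist_sym; have := Hx n.
    have := Rabs_triang (xs n i - x0 i) (x0 i); rewrite Rplus_comm Rplus_minus; lra.
  - exists (Rabs a + Rabs b) => n /=; apply: Rabs_le; have := Hs n.
    have := Rabs_pos a; have := Rabs_pos b; have := Rle_abs a; have := Rle_abs (- a); have := Rle_abs b.
    rewrite Rabs_Ropp; lra.
  - case: (choice _ (fun i => Hcv (Some i))) => x Hxcv.
    case: (Hcv None) => s Hscv.
    have Hdist := cv_coords N (fun n => xs (phi n)) x Hxcv.
    exists x, s => eps n0 He.
    case: (Hdist eps He) => n1 Hn1; case: (Hscv eps He) => n2 Hn2.
    pose n := max n0 (max n1 n2).
    exists (phi n); split; first by have := strict_ge phi Hphi n; lia.
    have h1 := Hn1 n ltac:(rewrite /ge; lia); have h2 := Hn2 n ltac:(rewrite /ge; lia).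
    move: h1 h2; rewrite /Rdist Rminus_0_r (Rabs_pos_eq _ (dist_nonneg _ _ _)) /=; split; lra.
Qed.

Section SpaceTimeSets.
Variable N : nat.
Implicit Types (C : point N -> R -> Prop) (w : point N -> R -> R).

Definition st_bounded C : Prop :=
  exists x0 M a b, forall x s, C x s -> dist x0 x <= M /\ a <= s <= b.

Definition st_closed C : Prop :=
  forall x s, (forall eps, eps > 0 -> exists y r, C y r /\ dist y x < eps /\ Rabs (r - s) < eps) ->
  C x s.

Definition st_cont C w : Prop :=
  forall x s, C x s -> forall eps, eps > 0 -> exists delta, delta > 0 /\
    forall y r, C y r -> dist x y < delta -> Rabs (r - s) < delta -> Rabs (w y r - w x s) < eps.

Lemma compact_cluster C (xs : nat -> point N) (ss : nat -> R) :
  st_bounded C -> st_closed C -> (forall n, C (xs n) (ss n)) ->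
  exists x s, C x s /\ cluster xs ss x s.
Proof.
  move=> [x0 [M [a [b HB]]]] Hcl HC.
  case: (bounded_cluster N x0 M a b xs ss) => [n|n|x [s Hcx]]; try by case: (HB _ _ (HC n)).
  exists x, s; split=> //; apply: Hcl => eps He.
  case: (Hcx eps O He) => n [_ [Hx Hs]]; by exists (xs n), (ss n).
Qed.

Lemma cluster_value C w (xs : nat -> point N) (ss : nat -> R) x s :
  st_cont C w -> C x s -> (forall n, C (xs n) (ss n)) -> cluster xs ss x s ->
  forall eps n0, eps > 0 -> exists n, (n0 <= n)%coq_nat /\ Rabs (w (xs n) (ss n) - w x s) < eps.
Proof.
  move=> Hw Hx HC Hcx eps n0 He.
  case: (Hw x s Hx eps He) => delta [Hd Hnear].
  case: (Hcx delta n0 Hd) => n [Hn [Hxn Hsn]].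
  exists n; split=> //; apply: Hnear => //; by rewrite dist_sym.
Qed.

Lemma st_cont_bounded_above C w : st_bounded C -> st_closed C -> st_cont C w ->
  exists K, forall x s, C x s -> w x s <= K.
Proof.
  move=> HB Hcl Hw; apply: NNPP => Hunb.
  have Hbig : forall n : nat, exists p : point N * R, C (fst p) (snd p) /\ INR n < w (fst p) (snd p).
  { move=> n; apply: NNPP => Hno; apply: Hunb; exists (INR n) => x s Hxs.
    apply: Rnot_lt_le => Hlt; apply: Hno; by exists (x, s). }
  case: (choice _ Hbig) => p Hp.
  case: (compact_cluster C (fun n => fst (p n)) (fun n => snd (p n))) => // [n|x [s [Hxs Hcx]]].
    exact: (proj1 (Hp n)).
  case: (INR_unbounded (w x s + 1)) => n0 Hn0.
  case: (cluster_value C w _ _ x s Hw Hxs (fun n => proj1 (Hp n)) Hcx 1 n0) => [|n [Hn Hwn]]; first lra.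
  have := proj2 (Hp n); have : INR n0 <= INR n by apply: le_INR.
  move: Hwn; rewrite /Rabs; case: Rcase_abs; lra.
Qed.

Lemma extreme_value C w : st_bounded C -> st_closed C -> (exists x s, C x s) -> st_cont C w ->
  exists xm sm, C xm sm /\ forall x s, C x s -> w x s <= w xm sm.
Proof.
  move=> HB Hcl [x1 [s1 H1]] Hw.
  case: (st_cont_bounded_above C w HB Hcl Hw) => K HK.
  pose E v := exists x s, C x s /\ v = w x s.
  case: (completeness E) => [|| m [Hub Hlub]].
  - by exists K => v [x [s [Hxs ->]]]; apply: HK.
  - by exists (w x1 s1), x1, s1.
  have Hle : forall x s, C x s -> w x s <= m by move=> x s Hxs; apply: Hub; exists x, s.
  have Hnear : forall n : nat, exists p : point N * R, C (fst p) (snd p) /\ m - / (INR n + 1) < w (fst p) (snd p).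
  { move=> n; apply: NNPP => Hno.
    have : 0 < / (INR n + 1) by apply: Rinv_0_lt_compat; have := pos_INR n; lra.
    have : m <= m - / (INR n + 1); last lra.
    apply: Hlub => v [x [s [Hxs ->]]]; apply: Rnot_lt_le => Hlt; apply: Hno; by exists (x, s). }
  case: (choice _ Hnear) => p Hp.
  case: (compact_cluster C (fun n => fst (p n)) (fun n => snd (p n))) => // [n|x [s [Hxs Hcx]]].
    exact: (proj1 (Hp n)).
  exists x, s; split=> // y r Hyr; apply: (Rle_trans _ m); first exact: Hle.
  apply: Rnot_lt_le => Hlt; pose eps := (m - w x s) / 2.
  case: (small_inv eps) => [|n0 Hn0]; first by rewrite /eps; lra.
  case: (cluster_value C w _ _ x s Hw Hxs (fun n => proj1 (Hp n)) Hcx eps n0) => [|n [Hn Hwn]].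
    by rewrite /eps; lra.
  have := Hn0 n Hn; have := proj2 (Hp n).
  move: Hwn; rewrite /eps /Rabs; case: Rcase_abs; lra.
Qed.
End SpaceTimeSets.

Lemma deriv_pos_crossing (h : R -> R) x d : derivable_pt_lim h x d -> 0 < d ->
  exists eta, eta > 0 /\ forall y, 0 < Rabs (y - x) < eta -> (h y - h x) * (y - x) > 0.
Proof.
  move=> Hd Hpos; case: (Hd (d / 2)) => [|eta Heta]; first lra.
  exists eta; split; first exact: cond_pos.
  move=> y [Hy0 Hy]; have Hk : y - x <> 0 by move=> E; rewrite E Rabs_R0 in Hy0; lra.
  have := Heta (y - x) Hk Hy; rewrite Rplus_minus => Hq.
  have Hquot : (h y - h x) / (y - x) > 0 by move: Hq; rewrite /Rabs; case: Rcase_abs; lra.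
  have -> : h y - h x = (h y - h x) / (y - x) * (y - x) by field.
  rewrite Rmult_assoc; apply: Rmult_gt_0_compat => //; nra.
Qed.

Lemma max_left_deriv (h : R -> R) x d delta : derivable_pt_lim h x d -> delta > 0 ->
  (forall y, x - delta < y <= x -> h y <= h x) -> 0 <= d.
Proof.
  move=> Hd Hdel Hmax; apply: Rnot_lt_le => Hneg.
  case: (deriv_pos_crossing (- h)%F x (- d)) => [||eta [Heta Hcross]]; [exact: derivable_pt_lim_opp | lra |].
  pose y := x - Rmin delta eta / 2.
  have Hm : 0 < Rmin delta eta by apply: Rmin_pos.
  have := Rmin_l delta eta; have := Rmin_r delta eta => ? ?.
  have := Hcross y; rewrite /y /opp_fct Rabs_left; last lra.
  have := Hmax y; rewrite /y => Hle Hc; have := Hle ltac:(lra); have := Hc ltac:(lra); nra.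
Qed.

Lemma max_right_deriv (h : R -> R) x d delta : derivable_pt_lim h x d -> delta > 0 ->
  (forall y, x <= y < x + delta -> h y <= h x) -> d <= 0.
Proof.
  move=> Hd Hdel Hmax; apply: Rnot_lt_le => Hpos.
  case: (deriv_pos_crossing h x d Hd Hpos) => eta [Heta Hcross].
  pose y := x + Rmin delta eta / 2.
  have Hm : 0 < Rmin delta eta by apply: Rmin_pos.
  have := Rmin_l delta eta; have := Rmin_r delta eta => ? ?.
  have := Hcross y; rewrite /y Rabs_right; last lra.
  have := Hmax y; rewrite /y => Hle Hc; have := Hle ltac:(lra); have := Hc ltac:(lra); nra.
Qed.

Lemma max_second_deriv (k g : R -> R) x L delta : delta > 0 ->
  (forall y, Rabs (y - x) < delta -> k y <= k x) ->
  (forall y, Rabs (y - x) < delta -> derivable_pt_lim k y (g y)) ->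
  derivable_pt_lim g x L -> L <= 0.
Proof.
  move=> Hdel Hmax Hk Hg.
  have Hkx : derivable_pt_lim k x (g x) by apply: Hk; rewrite Rminus_diag Rabs_R0.
  have Hg0 : g x = 0.
  { apply: Rle_antisym.
    - apply: (max_right_deriv k x _ delta Hkx Hdel) => y Hy; apply: Hmax; rewrite Rabs_right; lra.
    - apply: (max_left_deriv k x _ delta Hkx Hdel) => y Hy; apply: Hmax; rewrite Rabs_left1; lra. }
  apply: Rnot_lt_le => HL.
  case: (deriv_pos_crossing g x L Hg HL) => eta [Heta Hcross].
  pose h0 := Rmin delta eta / 2.
  have Hm : 0 < Rmin delta eta by apply: Rmin_pos.
  have := Rmin_l delta eta; have := Rmin_r delta eta => ? ?.
  case: (MVT_cor2 k g x (x + h0)) => [|c Hc|c [Hmvt Hc]]; first by rewrite /h0; lra.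
    by apply: Hk; rewrite /Rabs; case: Rcase_abs; rewrite /h0 in Hc; lra.
  have := Hcross c; rewrite Hg0 Rabs_right; last lra.
  have := Hmax (x + h0); rewrite Rabs_right /h0; last (rewrite /h0; lra).
  move: Hmvt; rewrite /h0 => ? Hle Hc'; have := Hle ltac:(lra); have := Hc' ltac:(rewrite /h0 in Hc; lra).
  nra.
Qed.

(** The parabolic comparison principle on cylinders. *)

Section Comparison.
Variable N : nat.
Implicit Types (f g : point N -> R -> R).

Definition cyl (x0 : point N) r t1 t2 : point N -> R -> Prop :=
  fun x s => dist x0 x <= r /\ t1 <= s <= t2.

Lemma cyl_bounded x0 r t1 t2 : st_bounded N (cyl x0 r t1 t2).
Proof. by exists x0, r, t1, t2. Qed.

Lemma cyl_closed x0 r t1 t2 : st_closed N (cyl x0 r t1 t2).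
Proof.
  move=> x s Hcl; split; [|split]; apply: Rnot_lt_le => Hout.
  - case: (Hcl (dist x0 x - r)) => [|y [r' [[Hy _] [Hyx _]]]]; first lra.
    have := dist_triang _ x0 y x; lra.
  - case: (Hcl (t1 - s)) => [|y [r' [[_ Hr] [_ Hrs]]]]; first lra.
    move: Hrs; rewrite /Rabs; case: Rcase_abs; lra.
  - case: (Hcl (s - t2)) => [|y [r' [[_ Hr] [_ Hrs]]]]; first lra.
    move: Hrs; rewrite /Rabs; case: Rcase_abs; lra.
Qed.

Definition has_derivs (P : point N -> R -> Prop) f (Df Lf : 'I_N -> point N -> R -> R)
    (Tf : point N -> R -> R) : Prop :=
  forall x s, P x s ->
    (forall i, derivable_pt_lim (fun y => f (upd x i y) s) (x i) (Df i x s)) /\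
    (forall i, derivable_pt_lim (fun y => Df i (upd x i y) s) (x i) (Lf i x s)) /\
    derivable_pt_lim (fun y => f x y) s (Tf x s).

Definition lap (L : 'I_N -> point N -> R -> R) (x : point N) (s : R) : R :=
  lsum (enum 'I_N) (fun i => L i x s).

Lemma partial_deriv_line P f Df Lf Tf x i s y : has_derivs P f Df Lf Tf -> P (upd x i y) s ->
  derivable_pt_lim (fun z => f (upd x i z) s) y (Df i (upd x i y) s).
Proof.
  move=> Hf HP; case: (Hf _ _ HP) => [Hd _]; have := Hd i.
  rewrite upd_same; congr derivable_pt_lim; apply: functional_extensionality => z.
  by rewrite upd_upd.
Qed.

Lemma interior_max_derivs x0 r t1 t2 f g Df Lf Tf Dg Lg Tg xm sm :
  let P x s := dist x0 x < r /\ t1 < s in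
  has_derivs P f Df Lf Tf -> has_derivs P g Dg Lg Tg ->
  dist x0 xm < r -> t1 < sm <= t2 ->
  (forall x s, cyl x0 r t1 t2 x s -> f x s - g x s <= f xm sm - g xm sm) ->
  Tg xm sm <= Tf xm sm /\ lap Lf xm sm <= lap Lg xm sm.
Proof.
  move=> P Hf Hg Hxm Hsm Hmax.
  case: (Hf xm sm (conj Hxm (proj1 Hsm))) => [_ [Hf2 Hf3]].
  case: (Hg xm sm (conj Hxm (proj1 Hsm))) => [_ [Hg2 Hg3]].
  split.
  - suff : 0 <= Tf xm sm - Tg xm sm by lra.
    apply: (max_left_deriv (fun y => f xm y - g xm y) sm _ (sm - t1)); first exact: derivable_pt_lim_minus.
      lra.
    move=> y Hy; apply: Hmax; split; [lra | lra].
  - apply: lsum_le => i; pose rho := r - dist x0 xm.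
    have Hin : forall y, Rabs (y - xm i) < rho -> P (upd xm i y) sm.
    { move=> y Hy; split; last lra.
      have := dist_triang _ x0 xm (upd xm i y); rewrite dist_upd /rho in Hy *; lra. }
    suff : Lf i xm sm - Lg i xm sm <= 0 by lra.
    apply: (max_second_deriv (fun y => f (upd xm i y) sm - g (upd xm i y) sm)
      (fun y => Df i (upd xm i y) sm - Dg i (upd xm i y) sm) (xm i) _ rho); first by rewrite /rho; lra.
    + move=> y Hy; rewrite upd_id; apply: Hmax; split; [left; exact: (proj1 (Hin y Hy)) | lra].
    + move=> y Hy; apply: derivable_pt_lim_minus; apply: partial_deriv_line;
        [exact: Hf | | exact: Hg |]; exact: Hin.
    + exact: derivable_pt_lim_minus.
Qed.

Lemma comparison x0 r t1 t2 f g Df Lf Tf Dg Lg Tg :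
  let P x s := dist x0 x < r /\ t1 < s in
  t1 <= t2 -> has_derivs P f Df Lf Tf -> has_derivs P g Dg Lg Tg ->
  st_cont N (cyl x0 r t1 t2) (fun x s => f x s - g x s) ->
  (forall x, dist x0 x <= r -> f x t1 <= g x t1) ->
  (forall x s, dist x0 x = r -> t1 <= s <= t2 -> f x s <= g x s) ->
  (forall x s, dist x0 x < r -> t1 < s <= t2 -> g x s < f x s ->
     Tg x s <= Tf x s -> lap Lf x s <= lap Lg x s -> False) ->
  forall x s, cyl x0 r t1 t2 x s -> f x s <= g x s.
Proof.
  move=> P Ht Hf Hg Hcont Hbot Hlat Hpde x s Hxs.
  have Hr : 0 <= r by have := dist_nonneg _ x0 x; case: Hxs; lra.
  case: (extreme_value N _ (fun x s => f x s - g x s) (cyl_bounded x0 r t1 t2) (cyl_closed x0 r t1 t2))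
    => // [|xm [sm [[Hxm Hsm] Hmax]]].
    by exists x0, t1; split; [rewrite dist_refl | lra].
  suff : f xm sm - g xm sm <= 0 by have := Hmax x s Hxs; lra.
  apply: Rnot_lt_le => Hpos.
  have Hsm1 : t1 < sm.
  { case: (Rle_lt_or_eq_dec t1 sm (proj1 Hsm)) => // Esm; subst sm; have := Hbot xm Hxm; lra. }
  have Hxm1 : dist x0 xm < r.
  { case: (Rle_lt_or_eq_dec _ _ Hxm) => // Exm; have := Hlat xm sm Exm Hsm; lra. }
  have [HT HL] := interior_max_derivs x0 r t1 t2 f g Df Lf Tf Dg Lg Tg xm sm Hf Hg Hxm1
    (conj Hsm1 (proj2 Hsm)) Hmax.
  apply: (Hpde xm sm Hxm1 (conj Hsm1 (proj2 Hsm))) => //; lra.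
Qed.
End Comparison.

Lemma continuity_pt_eps f s : continuity_pt f s -> forall eps, eps > 0 ->
  exists delta, delta > 0 /\ forall r, Rabs (r - s) < delta -> Rabs (f r - f s) < eps.
Proof.
  move=> Hf eps He; case: (Hf eps He) => delta [Hd Hnear]; exists delta; split; first lra.
  move=> r Hr; case: (Req_dec r s) => [->|Hne]; first by rewrite Rminus_diag Rabs_R0; lra.
  apply: (Hnear r); split; [split; [done | exact: not_eq_sym] | exact: Hr].
Qed.

Lemma deriv_continuity f s l : derivable_pt_lim f s l -> continuity_pt f s.
Proof. by move=> H; apply: (derivable_continuous_pt f s (exist _ l H)). Qed.

Section BarrierContinuity.
Variable N : nat.

Lemma sqdist_continuous (x0 x : point N) eps : eps > 0 ->
  exists delta, delta > 0 /\ forall y, dist x y < delta -> Rabs (sqdist y x0 - sqdist x x0) < eps.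
Proof.
  move=> He; pose D := dist x x0.
  have HD : 0 <= D := dist_nonneg _ x x0.
  exists (Rmin 1 (eps / (2 * D + 1))); split; first by apply: Rmin_pos; [lra | apply: Rdiv_lt_0_compat; lra].
  move=> y Hy; rewrite -!dist_sq -/D.
  have := Rmin_l 1 (eps / (2 * D + 1)); have := Rmin_r 1 (eps / (2 * D + 1)) => Hm2 Hm1.
  have Hup := dist_triang _ y x x0; rewrite (dist_sym _ y x) -/D in Hup.
  have Hlo := dist_triang _ x y x0; rewrite -/D in Hlo.
  have := dist_nonneg _ x y; have := dist_nonneg _ y x0.
  set e := dist x y in Hy Hup Hlo Hm1 Hm2 * => ? ?.
  have He' : e * (2 * D + 1) < eps.
  { have -> : eps = eps / (2 * D + 1) * (2 * D + 1) by field; lra.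
    apply: Rmult_lt_compat_r; lra. }
  have Hdiff : Rabs (dist y x0 - D) <= e by rewrite /Rabs; case: Rcase_abs; lra.
  have -> : dist y x0 ^ 2 - D ^ 2 = (dist y x0 - D) * (dist y x0 + D) by ring.
  rewrite Rabs_mult (Rabs_pos_eq (dist y x0 + D)); last lra.
  have := Rabs_pos (dist y x0 - D); nra.
Qed.

Lemma st_cont_sep (C : point N -> R -> Prop) (A F : R -> R) (x0 : point N) :
  (forall x s, C x s -> continuity_pt A s /\ continuity_pt F (sqdist x x0)) ->
  st_cont N C (fun x s => A s + F (sqdist x x0)).
Proof.
  move=> HAF x s Hxs eps He; case: (HAF x s Hxs) => [HA HF].
  case: (continuity_pt_eps A s HA (eps / 2)) => [|d1 [Hd1 H1]]; first lra.
  case: (continuity_pt_eps F _ HF (eps / 2)) => [|d2 [Hd2 H2]]; first lra.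
  case: (sqdist_continuous x0 x d2 Hd2) => d3 [Hd3 H3].
  exists (Rmin d1 d3); split; first by apply: Rmin_pos.
  move=> y r _ Hy Hr; have := Rmin_l d1 d3; have := Rmin_r d1 d3 => ? ?.
  have := H1 r ltac:(lra); have := H2 _ (H3 y ltac:(lra)).
  have := Rabs_triang (A r - A s) (F (sqdist y x0) - F (sqdist x x0)).
  have -> : A r - A s + (F (sqdist y x0) - F (sqdist x x0)) =
            A r + F (sqdist y x0) - (A s + F (sqdist x x0)) by ring.
  lra.
Qed.

Lemma st_cont_minus (C : point N -> R -> Prop) f g :
  st_cont N C f -> st_cont N C g -> st_cont N C (fun x s => f x s - g x s).
Proof.
  move=> Hf Hg x s Hxs eps He.
  case: (Hf x s Hxs (eps / 2)) => [|d1 [Hd1 H1]]; first lra.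
  case: (Hg x s Hxs (eps / 2)) => [|d2 [Hd2 H2]]; first lra.
  exists (Rmin d1 d2); split; first by apply: Rmin_pos.
  move=> y r Hyr Hy Hr; have := Rmin_l d1 d2; have := Rmin_r d1 d2 => ? ?.
  have := H1 y r Hyr ltac:(lra) ltac:(lra); have := H2 y r Hyr ltac:(lra) ltac:(lra).
  have := Rabs_triang (f y r - f x s) (- (g y r - g x s)); rewrite Rabs_Ropp.
  have -> : f y r - f x s + - (g y r - g x s) = f y r - g y r - (f x s - g x s) by ring.
  lra.
Qed.

Lemma st_cont_of_cont_on (Omega : point N -> Prop) (C : point N -> R -> Prop) u :
  cont_on Omega u -> (forall x s, C x s -> Omega x /\ 0 < s) -> st_cont N C u.
Proof.
  move=> Hu HC x s Hxs eps He; case: (HC x s Hxs) => Hx Hs.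
  case: (Hu x s Hx Hs eps He) => d [Hd H]; exists d; split=> // y r Hyr Hy Hr.
  by case: (HC y r Hyr) => ? ?; apply: H.
Qed.
End BarrierContinuity.

(** Real powers and the explicit solution of [psi' + psi^q = 0]. *)

Lemma Rpower_pos x p : 0 < Rpower x p.
Proof. exact: exp_pos. Qed.

Lemma Rpower_one_base p : Rpower 1 p = 1.
Proof. by rewrite /Rpower ln_1 Rmult_0_r exp_0. Qed.

Lemma Rpower_split1 x p : 0 < x -> Rpower x p = x * Rpower x (p - 1).
Proof. move=> Hx; rewrite -{2}(Rpower_1 x) // -Rpower_plus; f_equal; ring. Qed.

Lemma Rpower_opp_anti x y p : 0 <= p -> 0 < x <= y -> Rpower y (- p) <= Rpower x (- p).
Proof.
  move=> Hp Hxy; rewrite !Rpower_Ropp; apply: Rinv_le_contravar; first exact: Rpower_pos.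
  exact: Rle_Rpower_l.
Qed.

Lemma Rpower_lt1 x p : 0 < p -> 0 < x < 1 -> Rpower x p < 1.
Proof. move=> Hp Hx; rewrite -(Rpower_one_base p); exact: Rlt_Rpower_l. Qed.

Lemma deriv_Rpower_comp (h : R -> R) y d p : derivable_pt_lim h y d -> 0 < h y ->
  derivable_pt_lim (fun z => Rpower (h z) p) y (p * Rpower (h y) (p - 1) * d).
Proof.
  move=> Hd Hp; exact: (derivable_pt_lim_comp h (fun z => Rpower z p) y d _ Hd (derivable_pt_lim_power _ p Hp)).
Qed.

Lemma Rpower_superadd A B q : 0 < A -> 0 < B -> 1 <= q ->
  Rpower A q + Rpower B q <= Rpower (A + B) q.
Proof.
  move=> HA HB Hq; rewrite (Rpower_split1 A) // (Rpower_split1 B) // (Rpower_split1 (A + B)); last lra.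
  have := Rle_Rpower_l A (A + B) (q - 1) ltac:(lra) ltac:(lra).
  have := Rle_Rpower_l B (A + B) (q - 1) ltac:(lra) ltac:(lra).
  nra.
Qed.

Section ODE.
Variable q : R.
Hypothesis Hq : 1 < q.

(* The blow-up exponent [a = 1/(q-1)]; note [c_q q = a^a]. *)
Definition a_q : R := 1 / (q - 1).

Definition psi (T : R) : R := c_q q * Rpower T (- a_q).

Lemma a_q_pos : 0 < a_q.
Proof. rewrite /a_q; apply: Rdiv_lt_0_compat; lra. Qed.

Lemma a_q_mul : a_q * q = a_q + 1.
Proof. rewrite /a_q; field; lra. Qed.

Lemma c_q_pos : 0 < c_q q.
Proof. exact: Rpower_pos. Qed.

Lemma psi_pos T : 0 < psi T.
Proof. have := c_q_pos; have := Rpower_pos T (- a_q); rewrite /psi; nra. Qed.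

(* [psi(T)^q = a c_q T^(-a-1)], which is [- psi'(T)]. *)
Lemma psi_pow T : 0 < T -> Rpower (psi T) q = a_q * c_q q * Rpower T (- a_q - 1).
Proof.
  move=> HT; have Ha := a_q_pos.
  have Hc : Rpower (c_q q) q = a_q * c_q q.
    by rewrite /c_q -/a_q Rpower_mult a_q_mul Rpower_plus Rpower_1 //; ring.
  rewrite /psi -Rpower_mult_distr; [|exact: c_q_pos | exact: Rpower_pos].
  rewrite Hc Rpower_mult; do 2 f_equal; have := a_q_mul; lra.
Qed.

Lemma psi_ode s c : 0 < s + c ->
  derivable_pt_lim (fun y => psi (y + c)) s (- Rpower (psi (s + c)) q).
Proof.
  move=> Hsc; rewrite psi_pow //.
  have Hshift : derivable_pt_lim (fun y => y + c) s 1.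
    by have := derivable_pt_lim_plus _ _ s _ _ (derivable_pt_lim_id s) (derivable_pt_lim_const c s);
      rewrite Rplus_0_r.
  have := derivable_pt_lim_scal _ (c_q q) _ _ (deriv_Rpower_comp _ s _ (- a_q) Hshift Hsc).
  rewrite /mult_real_fct /psi; congr derivable_pt_lim; ring.
Qed.

Lemma psi_pow_anti T T' : 0 < T <= T' -> Rpower (psi T') q <= Rpower (psi T) q.
Proof.
  move=> HT; rewrite !psi_pow; try lra.
  have := Rpower_opp_anti T T' (a_q + 1) ltac:(have := a_q_pos; lra) HT.
  have -> : - (a_q + 1) = - a_q - 1 by ring.
  move=> Hle; apply: Rmult_le_compat_l => //; have := a_q_pos; have := c_q_pos; nra.
Qed.

Lemma psi_anti T T' : 0 < T <= T' -> psi T' <= psi T.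
Proof.
  move=> HT; rewrite /psi; apply: Rmult_le_compat_l; first by have := c_q_pos; lra.
  apply: Rpower_opp_anti => //; have := a_q_pos; lra.
Qed.
End ODE.

Section SolutionComparison.
Variables (N : nat) (q : R) (Omega : point N -> Prop) (u : point N -> R -> R).
Variables (Du : 'I_N -> point N -> R -> R) (D2u : 'I_N -> 'I_N -> point N -> R -> R).
Variable Dtu : point N -> R -> R.
Hypothesis Hq : 0 < q.
Hypothesis Hpos : forall x t, Omega x -> 0 < t -> 0 < u x t.
Hypothesis HC : C21_with Omega u Du D2u Dtu.
Hypothesis Hpde : forall x t, Omega x -> 0 < t ->
  Dtu x t - laplacian_of D2u x t + Rpower (u x t) q = 0.

Lemma solution_derivs (P : point N -> R -> Prop) :
  (forall x s, P x s -> Omega x /\ 0 < s) -> has_derivs N P u Du (fun i => D2u i i) Dtu.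
Proof.
  case: HC => [Hd _] HP x s Hxs; case: (HP x s Hxs) => Hx Hs.
  by case: (Hd x s Hx Hs) => [H1 [H2 H3]]; split; [|split=> // i; apply: H2].
Qed.

Section Cylinder.
Variables (x0 : point N) (r t1 t2 : R).
Hypothesis Ht : 0 < t1 <= t2.
Hypothesis Hball : forall y, dist x0 y <= r -> Omega y.

Let P x s := dist x0 x < r /\ t1 < s.

Lemma cyl_in_domain : forall x s, cyl N x0 r t1 t2 x s -> Omega x /\ 0 < s.
Proof. move=> x s [Hx Hs]; split; [exact: Hball | lra]. Qed.

Lemma open_cyl_in_domain : forall x s, P x s -> Omega x /\ 0 < s.
Proof. move=> x s [Hx Hs]; split; [apply: Hball; lra | lra]. Qed.

Lemma solution_cont : st_cont N (cyl N x0 r t1 t2) u.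
Proof. apply: (st_cont_of_cont_on N Omega); [exact: (proj1 (proj2 HC)) | exact: cyl_in_domain]. Qed.

Lemma below_supersolution W DW LW TW :
  has_derivs N P W DW LW TW -> st_cont N (cyl N x0 r t1 t2) W ->
  (forall x s, dist x0 x < r -> t1 < s <= t2 ->
     0 < W x s /\ lap N LW x s <= TW x s + Rpower (W x s) q) ->
  (forall x, dist x0 x <= r -> u x t1 <= W x t1) ->
  (forall x s, dist x0 x = r -> t1 <= s <= t2 -> u x s <= W x s) ->
  forall x s, cyl N x0 r t1 t2 x s -> u x s <= W x s.
Proof.
  move=> HW HWc Hsuper Hbot Hlat.
  apply: (comparison N x0 r t1 t2 u W Du (fun i => D2u i i) Dtu DW LW TW) => //.
  - lra.
  - exact: (solution_derivs _ open_cyl_in_domain).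
  - exact: (st_cont_minus N _ _ _ solution_cont HWc).
  - move=> x s Hx Hs Hlt HT HL.
    case: (Hsuper x s Hx Hs) => HW0 HWsup.
    have := Hpde x s (Hball x ltac:(lra)) ltac:(lra).
    have := Rlt_Rpower_l _ _ q Hq (conj HW0 Hlt).
    rewrite /laplacian_of -/(lsum _ _) -/(lap N (fun i => D2u i i) x s); lra.
Qed.

Lemma above_subsolution z Dz Lz Tz :
  has_derivs N P z Dz Lz Tz -> st_cont N (cyl N x0 r t1 t2) z ->
  (forall x s, dist x0 x < r -> t1 < s <= t2 -> 0 < z x s ->
     Tz x s + Rpower (z x s) q <= lap N Lz x s) ->
  (forall x, dist x0 x <= r -> z x t1 <= u x t1) ->
  (forall x s, dist x0 x = r -> t1 <= s <= t2 -> z x s <= u x s) ->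
  forall x s, cyl N x0 r t1 t2 x s -> z x s <= u x s.
Proof.
  move=> Hz Hzc Hsub Hbot Hlat.
  apply: (comparison N x0 r t1 t2 z u Dz Lz Tz Du (fun i => D2u i i) Dtu) => //.
  - lra.
  - exact: (solution_derivs _ open_cyl_in_domain).
  - exact: (st_cont_minus N _ _ _ Hzc solution_cont).
  - move=> x s Hx Hs Hlt HT HL.
    have Hu0 := Hpos x s (Hball x ltac:(lra)) ltac:(lra).
    have := Hsub x s Hx Hs ltac:(lra).
    have := Hpde x s (Hball x ltac:(lra)) ltac:(lra).
    have := Rlt_Rpower_l _ _ q Hq (conj Hu0 Hlt).
    rewrite /laplacian_of -/(lsum _ _) -/(lap N (fun i => D2u i i) x s); lra.
Qed.
End Cylinder.
End SolutionComparison.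

Lemma length_enum_ord N : length (enum 'I_N) = N.
Proof. rewrite -[in RHS](size_enum_ord N); by elim: (enum 'I_N) => //= a s ->. Qed.

Lemma derivable_pt_lim_eq f x l l' : derivable_pt_lim f x l -> l = l' -> derivable_pt_lim f x l'.
Proof. by move=> H <-. Qed.

Lemma deriv_affine a b y : derivable_pt_lim (fun z => a * (z - b)) y a.
Proof.
  move=> eps He; exists (mkposreal eps He) => h Hh _.
  have -> : (a * (y + h - b) - a * (y - b)) / h - a = 0 by field.
  rewrite Rabs_R0; lra.
Qed.

Section Radial.
Variables (N : nat) (x0 : point N).

Lemma deriv_sqdist_upd (x : point N) i y :
  derivable_pt_lim (fun z => sqdist (upd x i z) x0) y (2 * (y - x0 i)).
Proof.
  have -> : (fun z => sqdist (upd x i z) x0) =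
            (fun z => sqdist x x0 - (x i - x0 i)^2 + (1 * (z - x0 i)) * (1 * (z - x0 i))).
    by apply: functional_extensionality => z; rewrite sqdist_upd /=; ring.
  have Hsq := derivable_pt_lim_mult _ _ _ _ _ (deriv_affine 1 (x0 i) y) (deriv_affine 1 (x0 i) y).
  have := derivable_pt_lim_plus _ _ _ _ _ (derivable_pt_lim_const (sqdist x x0 - (x i - x0 i)^2) y) Hsq.
  move=> /derivable_pt_lim_eq; apply; ring.
Qed.

Lemma deriv_radial_line (F F1 : R -> R) (x : point N) i y :
  derivable_pt_lim F (sqdist (upd x i y) x0) (F1 (sqdist (upd x i y) x0)) ->
  derivable_pt_lim (fun z => F (sqdist (upd x i z) x0)) y
    (F1 (sqdist (upd x i y) x0) * (2 * (y - x0 i))).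
Proof.
  move=> HF; apply: derivable_pt_lim_eq.
    exact: (derivable_pt_lim_comp _ F y _ _ (deriv_sqdist_upd x i y) HF).
  ring.
Qed.

(* [radial A F x s = A s + F (|x - x0|^2)], with first partial derivatives
   [radial_D F1] and pure second partial derivatives [radial_L F1 F2] when
   [F' = F1] and [F1' = F2]. *)
Definition radial (A F : R -> R) (x : point N) (s : R) : R := A s + F (sqdist x x0).
Definition radial_D (F1 : R -> R) (i : 'I_N) (x : point N) (s : R) : R :=
  F1 (sqdist x x0) * (2 * (x i - x0 i)).
Definition radial_L (F1 F2 : R -> R) (i : 'I_N) (x : point N) (s : R) : R :=
  F2 (sqdist x x0) * (2 * (x i - x0 i))^2 + 2 * F1 (sqdist x x0).

Lemma radial_has_derivs (P : point N -> R -> Prop) (A TA F F1 F2 : R -> R) :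
  (forall x s, P x s -> derivable_pt_lim A s (TA s) /\
     derivable_pt_lim F (sqdist x x0) (F1 (sqdist x x0)) /\
     derivable_pt_lim F1 (sqdist x x0) (F2 (sqdist x x0))) ->
  has_derivs N P (radial A F) (radial_D F1) (radial_L F1 F2) (fun _ s => TA s).
Proof.
  move=> Hprof x s Hxs; case: (Hprof x s Hxs) => [HA [HF HF1]]; split; [|split].
  - move=> i; rewrite /radial /radial_D.
    have := deriv_radial_line F F1 x i (x i); rewrite upd_id => /(_ HF) Hline.
    have := derivable_pt_lim_plus (fun _ => A s) _ _ _ _ (derivable_pt_lim_const (A s) (x i)) Hline.
    by rewrite Rplus_0_l.
  - move=> i; rewrite /radial_D.
    have -> : (fun y => F1 (sqdist (upd x i y) x0) * (2 * (upd x i y i - x0 i))) =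
              (fun y => F1 (sqdist (upd x i y) x0) * (2 * (y - x0 i))).
      by apply: functional_extensionality => y; rewrite upd_same.
    have := deriv_radial_line F1 F2 x i (x i); rewrite upd_id => /(_ HF1) Hline.
    have := derivable_pt_lim_mult _ _ _ _ _ Hline (deriv_affine 2 (x0 i) (x i)).
    move=> /derivable_pt_lim_eq; apply; by rewrite /radial_L upd_id; ring.
  - have := derivable_pt_lim_plus _ (fun _ => F (sqdist x x0)) _ _ _ HA (derivable_pt_lim_const _ s).
    by rewrite Rplus_0_r.
Qed.

Lemma lap_radial (F1 F2 : R -> R) (x : point N) s :
  lap N (radial_L F1 F2) x s = 4 * sqdist x x0 * F2 (sqdist x x0) + 2 * INR N * F1 (sqdist x x0).
Proof.
  rewrite /lap /radial_L (lsum_ext _ _ (fun i => (4 * F2 (sqdist x x0)) * (x i - x0 i)^2 + 2 * F1 (sqdist x x0))).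
  - by rewrite lsum_plus lsum_scal lsum_const -sqdist_lsum length_enum_ord; ring.
  - by move=> i; ring.
Qed.

Lemma radial_cont (C : point N -> R -> Prop) (A F : R -> R) :
  (forall x s, C x s -> continuity_pt A s /\ continuity_pt F (sqdist x x0)) ->
  st_cont N C (radial A F).
Proof. exact: st_cont_sep. Qed.
End Radial.

(** The upper barrier: [psi(s - t1) + lam (R2 - |x - x0|^2)^(-beta)]. *)

Definition blowup (c p R2 rho : R) : R := c * Rpower (R2 - rho) (- p).

Lemma blowup_pos c p R2 rho : 0 < c -> 0 < blowup c p R2 rho.
Proof. by move=> Hc; apply: Rmult_lt_0_compat => //; apply: Rpower_pos. Qed.

Lemma deriv_blowup c p R2 rho : rho < R2 ->
  derivable_pt_lim (blowup c p R2) rho (blowup (c * p) (p + 1) R2 rho).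
Proof.
  move=> Hrho.
  have Hlin : derivable_pt_lim (fun r => R2 - r) rho (-1).
    by have := derivable_pt_lim_minus _ _ _ _ _ (derivable_pt_lim_const R2 rho) (derivable_pt_lim_id rho);
      rewrite Rminus_0_l.
  have := derivable_pt_lim_scal _ c _ _ (deriv_Rpower_comp _ rho _ (- p) Hlin ltac:(lra)).
  move=> /derivable_pt_lim_eq; apply; rewrite /blowup.
  have -> : - (p + 1) = - p - 1 by ring.
  ring.
Qed.

Lemma blowup_continuous c p R2 rho : rho < R2 -> continuity_pt (blowup c p R2) rho.
Proof. by move=> H; apply: deriv_continuity; apply: deriv_blowup. Qed.

Lemma power_blowup p C M : 0 < p -> 0 < C ->
  exists eta, 0 < eta /\ forall y, 0 < y <= eta -> M <= C * Rpower y (- p).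
Proof.
  move=> Hp HC; pose X := (Rabs M + 1) / C.
  have HX : 0 < X by rewrite /X; apply: Rdiv_lt_0_compat; [have := Rabs_pos M; lra | lra].
  exists (Rpower X (- / p)); split; first exact: Rpower_pos.
  move=> y Hy; have := Rpower_opp_anti y (Rpower X (- / p)) p ltac:(lra) Hy.
  rewrite Rpower_mult (_ : - / p * - p = 1); last by field; lra.
  rewrite Rpower_1 // => HyX.
  have : C * X = Rabs M + 1 by rewrite /X; field; lra.
  have := Rle_abs M; have := Rmult_le_compat_l C _ _ ltac:(lra) HyX; lra.
Qed.

Lemma psi_large q M : 1 < q -> exists eta, 0 < eta /\ forall y, 0 < y <= eta -> M <= psi q y.
Proof. move=> Hq; exact: (power_blowup _ _ M (a_q_pos q Hq) (c_q_pos q)). Qed.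

Section UpperBarrier.
Variables (N : nat) (q : R).
Hypothesis Hq : 1 < q.
Variables (x0 : point N) (Rb : R).
Hypothesis HRb : 0 < Rb.

(* The exponent [beta = 2a] and the constant [lam] for which [Delta V <= V^q]. *)
Definition beta : R := 2 * a_q q.
Definition lam_up : R := Rpower (beta * (Rb * Rb) * (2 * INR N + 4 * beta + 4)) (a_q q).

Lemma beta_pos : 0 < beta.
Proof. have := a_q_pos q Hq; rewrite /beta; lra. Qed.

Lemma lam_up_pos : 0 < lam_up.
Proof. exact: Rpower_pos. Qed.

Definition Vup : R -> R := blowup lam_up beta (Rb * Rb).
Definition V1up : R -> R := blowup (lam_up * beta) (beta + 1) (Rb * Rb).
Definition V2up : R -> R := blowup (lam_up * beta * (beta + 1)) (beta + 1 + 1) (Rb * Rb).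
Definition Wup (t1 : R) := radial N x0 (fun s => psi q (s - t1)) Vup.

Lemma Vup_super x s : sqdist x x0 < Rb * Rb ->
  lap N (radial_L N x0 V1up V2up) x s <= Rpower (Vup (sqdist x x0)) q.
Proof.
  move=> Hx; rewrite lap_radial /V1up /V2up /Vup /blowup.
  set rho := sqdist x x0 in Hx *; set S := Rb * Rb - rho.
  have HS : 0 < S by rewrite /S; lra.
  have Hrho := sqdist_nonneg _ x x0; rewrite -/rho in Hrho.
  have Hbe := beta_pos; have HN := pos_INR N; have Hl := lam_up_pos; have Ha := a_q_pos q Hq.
  pose Q := beta * (Rb * Rb) * (2 * INR N + 4 * beta + 4).
  have HlamQ : Rpower lam_up q = lam_up * Q.
  { have HQ : 0 < Q by rewrite /Q; apply: Rmult_lt_0_compat; [apply: Rmult_lt_0_compat; nra | lra].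
    have E : a_q q * (q - 1) = 1 by rewrite /a_q; field; lra.
    by rewrite (Rpower_split1 lam_up) // {2}/lam_up Rpower_mult E Rpower_1. }
  have Hexp : - beta * q = - (beta + 1 + 1) by rewrite /beta; have := a_q_mul q Hq; lra.
  rewrite -Rpower_mult_distr ?(Rpower_mult S) ?Hexp ?HlamQ; [|done | exact: Rpower_pos].
  rewrite (Rpower_split1 S (- (beta + 1))) // (_ : - (beta + 1) - 1 = - (beta + 1 + 1)); last ring.
  set P2 := Rpower S (- (beta + 1 + 1)).
  have HP2 : 0 < P2 by apply: Rpower_pos.
  have Hkey : 4 * beta * (beta + 1) * rho + 2 * beta * INR N * S <= Q.
  { have H1 : 0 <= (beta * (beta + 1)) * (Rb * Rb - rho) by apply: Rmult_le_pos; nra.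
    have H2 : 0 <= (beta * INR N) * (Rb * Rb - S) by apply: Rmult_le_pos; rewrite /S; nra.
    rewrite /Q; lra. }
  have := Rmult_le_compat_r (lam_up * P2) _ _ ltac:(nra) Hkey; nra.
Qed.

Lemma Wup_super t1 x s : sqdist x x0 < Rb * Rb -> t1 < s ->
  0 < Wup t1 x s /\
  lap N (radial_L N x0 V1up V2up) x s <= - Rpower (psi q (s - t1)) q + Rpower (Wup t1 x s) q.
Proof.
  move=> Hx Hs; have Hpsi := psi_pos q (s - t1).
  have HV := blowup_pos lam_up beta (Rb * Rb) (sqdist x x0) lam_up_pos.
  split; first by rewrite /Wup /radial /Vup; lra.
  have := Rpower_superadd _ _ q Hpsi HV ltac:(lra); have := Vup_super x s Hx.
  rewrite /Wup /radial /Vup; lra.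
Qed.

Lemma Wup_derivs t1 (P : point N -> R -> Prop) :
  (forall x s, P x s -> sqdist x x0 < Rb * Rb /\ t1 < s) ->
  has_derivs N P (Wup t1)
    (radial_D N x0 V1up) (radial_L N x0 V1up V2up) (fun _ s => - Rpower (psi q (s - t1)) q).
Proof.
  move=> HP; apply: radial_has_derivs => x s /HP [Hin Hs]; split; [|split].
  - by apply: psi_ode; lra.
  - by rewrite /Vup /V1up; apply: deriv_blowup.
  - by rewrite /V1up /V2up -Rmult_assoc; apply: deriv_blowup.
Qed.

Lemma Vup_large M : exists rho, 0 <= rho < Rb /\ M <= Vup (rho * rho).
Proof.
  case: (power_blowup beta lam_up M beta_pos lam_up_pos) => e [He HM].
  pose m := Rmin e (Rb * Rb / 2).
  have Hm : 0 < m by apply: Rmin_pos; nra.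
  have := Rmin_l e (Rb * Rb / 2); have := Rmin_r e (Rb * Rb / 2); rewrite -/m => Hm2 Hm1.
  exists (sqrt (Rb * Rb - m)); rewrite sqrt_sqrt; last nra.
  split; last by rewrite /Vup /blowup (_ : Rb * Rb - (Rb * Rb - m) = m); [apply: HM; lra | ring].
  split; first exact: sqrt_pos.
  rewrite -[X in _ < X](sqrt_square Rb); last lra.
  apply: sqrt_lt_1_alt; nra.
Qed.
End UpperBarrier.

(** The lower barrier: [lam psi(s + c) - K |x - x0|^2]. *)

Lemma psi_scaling q al be t : 1 < q -> 0 < al -> 0 < be -> 0 < t ->
  psi q (al * t) =
  Rpower al (- a_q q) * Rpower be (a_q q + 1) / a_q q * t * Rpower (psi q (be * t)) q.
Proof.
  move=> Hq Hal Hbe Ht; have Ha := a_q_pos q Hq.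
  rewrite (psi_pow q Hq); last exact: Rmult_lt_0_compat.
  rewrite /psi -!Rpower_mult_distr //.
  rewrite (Rpower_split1 t (- a_q q)) // (_ : - a_q q - 1 = - (a_q q + 1)); last ring.
  have Hbb : Rpower be (a_q q + 1) * Rpower be (- (a_q q + 1)) = 1.
    by rewrite -Rpower_plus Rplus_opp_r Rpower_O.
  set X := Rpower be (a_q q + 1) in Hbb *; set Y := Rpower be (- (a_q q + 1)) in Hbb *.
  transitivity (c_q q * (Rpower al (- a_q q) * (t * Rpower t (- (a_q q + 1)))) * (X * Y));
    [rewrite Hbb; ring | field; lra].
Qed.

Section LowerBarrier.
Variables (N : nat) (q : R).
Hypothesis Hq : 1 < q.
Variables (x0 : point N) (lam K c : R).

Definition zlow : point N -> R -> R :=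
  radial N x0 (fun s => lam * psi q (s + c)) (fun rho => - K * rho).

Lemma zlow_derivs (P : point N -> R -> Prop) : (forall x s, P x s -> 0 < s + c) ->
  has_derivs N P zlow (radial_D N x0 (fun _ => - K)) (radial_L N x0 (fun _ => - K) (fun _ => 0))
    (fun _ s => lam * - Rpower (psi q (s + c)) q).
Proof.
  move=> HP; apply: radial_has_derivs => x s /HP Hs; split; [|split].
  - exact: (derivable_pt_lim_scal (fun s => psi q (s + c)) lam s _ (psi_ode q Hq s c Hs)).
  - apply: (derivable_pt_lim_eq _ _ _ _ (derivable_pt_lim_scal id (- K) _ _ (derivable_pt_lim_id _))); ring.
  - exact: derivable_pt_lim_const.
Qed.

Lemma zlow_cont (C : point N -> R -> Prop) : (forall x s, C x s -> 0 < s + c) -> st_cont N C zlow.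
Proof.
  move=> HC; apply: radial_cont => x s /HC Hs; split; apply: deriv_continuity.
  - exact: (derivable_pt_lim_scal (fun s => psi q (s + c)) lam s _ (psi_ode q Hq s c Hs)).
  - exact: (derivable_pt_lim_scal id (- K) _ _ (derivable_pt_lim_id _)).
Qed.

Lemma zlow_sub T x s : 0 < lam < 1 -> 0 <= K -> 0 < s + c -> s <= T ->
  2 * INR N * K <= lam * (1 - Rpower lam (q - 1)) * Rpower (psi q (T + c)) q ->
  0 < zlow x s ->
  lam * - Rpower (psi q (s + c)) q + Rpower (zlow x s) q <=
    lap N (radial_L N x0 (fun _ => - K) (fun _ => 0)) x s.
Proof.
  move=> Hlam HK Hs HsT HKsmall Hz; rewrite lap_radial.
  have Hpsi := psi_pos q (s + c).
  have Hzle : zlow x s <= lam * psi q (s + c).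
    by rewrite /zlow /radial; have := sqdist_nonneg _ x x0; nra.
  have Hzq : Rpower (zlow x s) q <= Rpower lam (q - 1) * (lam * Rpower (psi q (s + c)) q).
  { apply: (Rle_trans _ (Rpower (lam * psi q (s + c)) q)); first by apply: Rle_Rpower_l; lra.
    rewrite -Rpower_mult_distr ?(Rpower_split1 lam q); lra. }
  have Hmono := psi_pow_anti q Hq (s + c) (T + c) ltac:(lra).
  have HL : 0 < 1 - Rpower lam (q - 1) by have := Rpower_lt1 lam (q - 1) ltac:(lra) Hlam; lra.
  have := Rmult_le_compat_l (lam * (1 - Rpower lam (q - 1))) _ _ ltac:(nra) Hmono.
  nra.
Qed.
End LowerBarrier.

(* The constants of the lower barrier at time [t]: [K] satisfies the subsolution
   condition up to time [(1 + sg) t], and the radius [r] where [z] vanishes obeys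
   [r^2 = A t] with [A] independent of [t]. *)
Lemma zlow_constants N q lam sg : 1 < q -> 0 < lam < 1 -> 0 < sg -> exists A, 0 < A /\ forall t, 0 < t ->
  exists K, 0 < K /\
    2 * INR N * K <= lam * (1 - Rpower lam (q - 1)) * Rpower (psi q ((1 + sg) * t)) q /\
    K * (A * t) = lam * psi q (sg * t).
Proof.
  move=> Hq Hlam Hsg; pose L := Rpower lam (q - 1).
  have HL : 0 < 1 - L by have := Rpower_lt1 lam (q - 1) ltac:(lra) Hlam; rewrite /L; lra.
  have HN := pos_INR N; have Ha := a_q_pos q Hq.
  pose kappa := Rpower sg (- a_q q) * Rpower (1 + sg) (a_q q + 1) / a_q q.
  have Hkappa : 0 < kappa.
    by apply: Rdiv_lt_0_compat => //; apply: Rmult_lt_0_compat; exact: Rpower_pos.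
  exists ((2 * INR N + 1) * kappa / (1 - L)); split; first by apply: Rdiv_lt_0_compat; nra.
  move=> t Ht; pose P := Rpower (psi q ((1 + sg) * t)) q.
  have HP : 0 < P by exact: Rpower_pos.
  have HlLP : 0 < lam * (1 - L) * P by apply: Rmult_lt_0_compat => //; nra.
  exists (lam * (1 - L) * P / (2 * INR N + 1)); split; [|split].
  - by apply: Rdiv_lt_0_compat; lra.
  - set K := lam * (1 - L) * P / (2 * INR N + 1).
    have HK : 0 < K by apply: Rdiv_lt_0_compat; lra.
    have -> : lam * (1 - L) * P = (2 * INR N + 1) * K by rewrite /K; field; lra.
    nra.
  - rewrite (psi_scaling q sg (1 + sg) t Hq) // -/P /kappa; last lra.
    field; split; [lra | split; lra].
Qed.

Section Bounds.
Variables (N : nat) (q : R) (Omega : point N -> Prop) (u : point N -> R -> R).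
Variables (Du : 'I_N -> point N -> R -> R) (D2u : 'I_N -> 'I_N -> point N -> R -> R).
Variable Dtu : point N -> R -> R.
Hypothesis Hq : 1 < q.
Hypothesis Hpos : forall x t, Omega x -> 0 < t -> 0 < u x t.
Hypothesis HC : C21_with Omega u Du D2u Dtu.
Hypothesis Hpde : forall x t, Omega x -> 0 < t ->
  Dtu x t - laplacian_of D2u x t + Rpower (u x t) q = 0.

(* We compare [u] with
   [W = psi(s - th t) + V(x)] on a cylinder [B(x0, rho) x [t2, t]] whose parabolic
   boundary is so close to the singular set of [W] that [W] exceeds [max u] there. *)
Lemma upper_bound x0 Rb t th : 0 < Rb -> (forall y, dist x0 y <= Rb -> Omega y) ->
  0 < t -> 0 < th < 1 ->
  u x0 t <= psi q ((1 - th) * t) + Vup N q Rb 0.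
Proof.
  move=> HRb Hball Ht Hth; pose t1 := th * t.
  have Ht1 : 0 < t1 < t by rewrite /t1; nra.
  have Hdom : forall x s, cyl N x0 Rb t1 t x s -> Omega x /\ 0 < s.
    by move=> x s [Hx Hs]; split; [exact: Hball | lra].
  case: (extreme_value N (cyl N x0 Rb t1 t) u (cyl_bounded N x0 Rb t1 t) (cyl_closed N x0 Rb t1 t))
    => [|| xm [sm [_ Hmax]]].
  - by exists x0, t1; split; [rewrite dist_refl; lra | lra].
  - by apply: (st_cont_of_cont_on N Omega) => //; case: HC => _ [].
  set Um := u xm sm in Hmax.
  case: (psi_large q Um Hq) => e1 [He1 Hpsi].
  case: (Vup_large N q Hq Rb HRb Um) => rho [Hrho HV].
  pose t2 := t1 + Rmin e1 ((t - t1) / 2).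
  have := Rmin_l e1 ((t - t1) / 2); have := Rmin_r e1 ((t - t1) / 2) => Hm2 Hm1.
  have Hm : 0 < Rmin e1 ((t - t1) / 2) by apply: Rmin_pos; lra.
  have Ht2 : t1 < t2 < t by rewrite /t2; lra.
  have Hsub : forall x, dist x0 x <= rho -> dist x0 x <= Rb by move=> x; lra.
  have Hinner : forall x, dist x0 x <= rho -> sqdist x x0 < Rb * Rb.
    by move=> x Hx; have := sqdist_le_of_dist _ _ _ _ Hx; have := dist_nonneg _ x0 x; nra.
  have := below_supersolution N q Omega u Du D2u Dtu ltac:(lra) HC Hpde x0 rho t2 t
    ltac:(lra) (fun y Hy => Hball y (Hsub y Hy)) (Wup N q x0 Rb t1).
  have HP : forall x s, dist x0 x < rho /\ t2 < s -> sqdist x x0 < Rb * Rb /\ t1 < s.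
    by move=> x s [Hx Hs]; split; [apply: Hinner | ]; lra.
  move=> /(_ _ _ _ (Wup_derivs N q Hq x0 Rb t1 _ HP)) Hcomp.
  suff : u x0 t <= Wup N q x0 Rb t1 x0 t.
    by rewrite /Wup /radial sqdist_refl (_ : t - t1 = (1 - th) * t) // /t1; ring.
  apply: Hcomp; last by split; [rewrite dist_refl; lra | lra].
  - apply: radial_cont => x s [Hx Hs]; split.
    + apply: deriv_continuity; apply: psi_ode; lra.
    + exact: (blowup_continuous _ _ _ _ (Hinner x Hx)).
  - move=> x s Hx Hs; exact: (Wup_super N q Hq x0 Rb t1 x s (Hinner x ltac:(lra)) ltac:(lra)).
  - move=> x Hx; have Hcyl : cyl N x0 Rb t1 t x t2 by split; [exact: Hsub | lra].
    have := Hmax x t2 Hcyl.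
    have := Hpsi (t2 - t1) ltac:(rewrite /t2; lra).
    have := blowup_pos (lam_up N q Rb) (beta q) (Rb * Rb) (sqdist x x0) (lam_up_pos N q Rb).
    rewrite /Wup /radial /Vup; lra.
  - move=> x s Hx Hs; have Hcyl : cyl N x0 Rb t1 t x s by split; [apply: Hsub | ]; lra.
    have := Hmax x s Hcyl.
    rewrite /Wup /radial (sqdist_eq_of_dist _ _ _ _ Hx); have := psi_pos q (s - t1); lra.
Qed.

(* Lower bound at one time [t]: compare [u] with [z = lam psi(s + sg t) - K |x - x0|^2]
   on [B(x0, r) x [t1, t]], where [K r^2 = lam psi(sg t)] makes [z <= 0 < u] on the
   lateral boundary and [u] is assumed to exceed [lam psi(sg t) >= z] at time [t1]. *)
Lemma lower_bound_at x0 lam sg K r t t1 : 0 < lam < 1 -> 0 < sg -> 0 < t1 < t -> 0 < K -> 0 <= r ->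
  2 * INR N * K <= lam * (1 - Rpower lam (q - 1)) * Rpower (psi q ((1 + sg) * t)) q ->
  K * (r * r) = lam * psi q (sg * t) ->
  (forall y, dist x0 y <= r -> Omega y) ->
  (forall x, dist x0 x <= r -> lam * psi q (sg * t) < u x t1) ->
  lam * psi q ((1 + sg) * t) <= u x0 t.
Proof.
  move=> Hlam Hsg Ht HK Hr0 HKsmall Hr Hball Hbig; pose c := sg * t.
  rewrite -/c in Hr Hbig; have Hc : 0 < c by rewrite /c; nra.
  have HP : forall x s, dist x0 x < r /\ t1 < s -> 0 < s + c by move=> x s [_ Hs]; lra.
  have Hcyl : forall x s, cyl N x0 r t1 t x s -> 0 < s + c by move=> x s [_ Hs]; lra.
  have := above_subsolution N q Omega u Du D2u Dtu ltac:(lra) Hpos HC Hpde x0 r t1 t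
    ltac:(lra) Hball (zlow N q x0 lam K c).
  move=> /(_ _ _ _ (zlow_derivs N q Hq x0 lam K c _ HP)) Hcomp.
  suff : zlow N q x0 lam K c x0 t <= u x0 t.
    by rewrite /zlow /radial sqdist_refl (_ : t + c = (1 + sg) * t) /c; [lra | ring].
  apply: Hcomp; last by split; [rewrite dist_refl | lra].
  - exact: (zlow_cont N q Hq x0 lam K c _ Hcyl).
  - move=> x s Hx Hs; apply: (zlow_sub N q Hq x0 lam K c t x s Hlam ltac:(lra) ltac:(lra) ltac:(lra)).
    by rewrite (_ : t + c = (1 + sg) * t) // /c; ring.
  - move=> x Hx; have := Hbig x Hx; have := psi_anti q Hq c (t1 + c) ltac:(lra).
    have := sqdist_nonneg _ x x0; rewrite /zlow /radial; nra.
  - move=> x s Hx Hs; have := Hpos x s (Hball x ltac:(lra)) ltac:(lra).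
    have := psi_anti q Hq c (s + c) ltac:(lra).
    rewrite /zlow /radial (sqdist_eq_of_dist _ _ _ _ Hx); nra.
Qed.

(* Lower bound: if [u] is uniformly large near [t = 0] on closed balls of [Omega],
   then for [0 < lam < 1] and [sg > 0] there is [delta] such that
   [lam psi((1 + sg) t) <= u(x0, t)] whenever [B(x0, Rb)] lies in [Omega] and
   [0 < t < delta]: for such [t] the radius [sqrt (A t)] of [lower_bound_at] is
   below [Rb]. *)
Lemma lower_bound Rb lam sg : 0 < Rb -> 0 < lam < 1 -> 0 < sg ->
  (forall (x0 : point N) r M, (forall y, dist x0 y <= r -> Omega y) ->
     exists delta, delta > 0 /\ forall x s, dist x0 x <= r -> 0 < s < delta -> M < u x s) ->
  exists delta, delta > 0 /\ forall (x0 : point N) t, (forall y, dist x0 y <= Rb -> Omega y) ->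
    0 < t < delta -> lam * psi q ((1 + sg) * t) <= u x0 t.
Proof.
  move=> HRb Hlam Hsg Hlarge.
  case: (zlow_constants N q lam sg Hq Hlam Hsg) => A [HA Hconst].
  exists (Rb * Rb / A); split; first by apply: Rdiv_lt_0_compat; nra.
  move=> x0 t Hball Ht; have Ht0 : 0 < t by lra.
  case: (Hconst t Ht0) => K [HK [HKsmall HKr]].
  have HAt : A * t < Rb * Rb.
    by have := Rmult_lt_compat_l A _ _ HA (proj2 Ht); rewrite (_ : A * (Rb * Rb / A) = Rb * Rb) //; field; lra.
  pose r := sqrt (A * t).
  have Hrr : r * r = A * t by rewrite /r; apply: sqrt_sqrt; nra.
  have HrRb : r < Rb by have := sqrt_pos (A * t); rewrite -/r; case: (Rlt_le_dec r Rb) => // H; nra.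
  have Hsub : forall y, dist x0 y <= r -> Omega y by move=> y Hy; apply: Hball; lra.
  case: (Hlarge x0 r (lam * psi q (sg * t)) Hsub) => dl [Hdl Hbig].
  pose t1 := Rmin dl t / 2.
  have := Rmin_l dl t; have := Rmin_r dl t; have := Rmin_pos dl t Hdl Ht0 => Hm0 Hm2 Hm1.
  apply: (lower_bound_at x0 lam sg K r t t1) => //; first by rewrite /t1; lra.
  - exact: sqrt_pos.
  - by rewrite Hrr.
  by move=> x Hx; apply: Hbig => //; rewrite /t1; lra.
Qed.
End Bounds.

Lemma psi_self_similar q k t : 0 < k -> 0 < t ->
  Rpower t (a_q q) * psi q (k * t) = c_q q * Rpower k (- a_q q).
Proof.
  move=> Hk Ht; rewrite /psi -Rpower_mult_distr //.
  have Htt : Rpower t (a_q q) * Rpower t (- a_q q) = 1 by rewrite -Rpower_plus Rplus_opp_r Rpower_O.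
  transitivity (c_q q * Rpower k (- a_q q) * (Rpower t (a_q q) * Rpower t (- a_q q)));
    [ring | rewrite Htt; ring].
Qed.

Lemma continuous_small_point (f : R -> R) e : continuity_pt f 0 -> 0 < e ->
  exists eta, 0 < eta <= / 2 /\ Rabs (f eta - f 0) < e.
Proof.
  move=> Hf He; case: (continuity_pt_eps f 0 Hf e He) => d [Hd H].
  exists (Rmin (d / 2) (/ 2)); split; first by split; [apply: Rmin_pos; lra | apply: Rmin_r].
  apply: H; rewrite Rminus_0_r Rabs_pos_eq; last by apply: Rlt_le; apply: Rmin_pos; lra.
  have := Rmin_l (d / 2) (/ 2); lra.
Qed.

Section Limits.
Variables (N : nat) (q : R) (Omega : point N -> Prop) (u : point N -> R -> R).
Variables (Du : 'I_N -> point N -> R -> R) (D2u : 'I_N -> 'I_N -> point N -> R -> R).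
Variable Dtu : point N -> R -> R.
Hypothesis Hq : 1 < q.
Hypothesis Hpos : forall x t, Omega x -> 0 < t -> 0 < u x t.
Hypothesis HC : C21_with Omega u Du D2u Dtu.
Hypothesis Hpde : forall x t, Omega x -> 0 < t ->
  Dtu x t - laplacian_of D2u x t + Rpower (u x t) q = 0.
Variable Rb : R.
Hypothesis HRb : 0 < Rb.

Lemma upper_limit eps : eps > 0 -> exists delta, delta > 0 /\
  forall (x0 : point N) t, (forall y, dist x0 y <= Rb -> Omega y) -> 0 < t < delta ->
    Rpower t (a_q q) * u x0 t < c_q q + eps.
Proof.
  move=> Heps; have Ha := a_q_pos q Hq; have Hc := c_q_pos q.
  pose f th := Rpower (1 - th) (- a_q q).
  have Hf : continuity_pt f 0.
  { apply: deriv_continuity; apply: (deriv_Rpower_comp (fun th => 1 - th)); last lra.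
    exact: (derivable_pt_lim_minus _ _ _ _ _ (derivable_pt_lim_const 1 0) (derivable_pt_lim_id 0)). }
  case: (continuous_small_point f (eps / (2 * c_q q)) Hf) => [|th [Hth Hfth]].
    by apply: Rdiv_lt_0_compat; lra.
  rewrite /f Rminus_0_r Rpower_one_base -/(f th) in Hfth.
  have Hpsi_part : c_q q * f th < c_q q + eps / 2.
  { have : f th < 1 + eps / (2 * c_q q) by move: Hfth; rewrite /Rabs; case: Rcase_abs; lra.
    move=> /(Rmult_lt_compat_l (c_q q) _ _ Hc).
    by rewrite (_ : c_q q * (1 + eps / (2 * c_q q)) = c_q q + eps / 2) //; field; lra. }
  pose D := Vup N q Rb 0.
  have HD : 0 < D by apply: blowup_pos; apply: lam_up_pos.
  pose d := Rpower (eps / (2 * (D + 1))) (/ a_q q).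
  exists d; split; first exact: Rpower_pos.
  move=> x0 t Hball Ht.
  have Hup := upper_bound N q Omega u Du D2u Dtu Hq HC Hpde x0 Rb t th HRb Hball ltac:(lra) ltac:(lra).
  have Hta : Rpower t (a_q q) * D < eps / 2.
  { have : Rpower t (a_q q) < eps / (2 * (D + 1)).
    { have := Rlt_Rpower_l t d (a_q q) Ha ltac:(lra).
      rewrite /d Rpower_mult Rinv_l ?Rpower_1 //; [apply: Rdiv_lt_0_compat | ]; lra. }
    have -> : eps / 2 = eps / (2 * (D + 1)) * (D + 1) by field; lra.
    have := Rpower_pos t (a_q q); nra. }
  have Hself := psi_self_similar q (1 - th) t ltac:(lra) ltac:(lra).
  have := Rmult_le_compat_l (Rpower t (a_q q)) _ _ (Rlt_le _ _ (Rpower_pos t (a_q q))) Hup.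
  rewrite Rmult_plus_distr_l Hself -/D; rewrite /f in Hpsi_part; lra.
Qed.

Lemma lower_limit eps : eps > 0 ->
  (forall (x0 : point N) r M, (forall y, dist x0 y <= r -> Omega y) ->
     exists delta, delta > 0 /\ forall x s, dist x0 x <= r -> 0 < s < delta -> M < u x s) ->
  exists delta, delta > 0 /\
  forall (x0 : point N) t, (forall y, dist x0 y <= Rb -> Omega y) -> 0 < t < delta ->
    c_q q - eps < Rpower t (a_q q) * u x0 t.
Proof.
  move=> Heps Hlarge; have Hc := c_q_pos q.
  pose f et := (1 - et) * Rpower (1 + et) (- a_q q).
  have Hf : continuity_pt f 0.
  { apply: deriv_continuity; apply: derivable_pt_lim_mult.
    - exact: (derivable_pt_lim_minus _ _ _ _ _ (derivable_pt_lim_const 1 0) (derivable_pt_lim_id 0)).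
    - apply: (deriv_Rpower_comp (fun et => 1 + et)); last lra.
      exact: (derivable_pt_lim_plus _ _ _ _ _ (derivable_pt_lim_const 1 0) (derivable_pt_lim_id 0)). }
  case: (continuous_small_point f (eps / c_q q) Hf) => [|et [Het Hfet]].
    by apply: Rdiv_lt_0_compat; lra.
  rewrite /f Rplus_0_r Rpower_one_base Rminus_0_r Rmult_1_l -/(f et) in Hfet.
  have Hmain : c_q q - eps < c_q q * f et.
  { have : 1 - eps / c_q q < f et by move: Hfet; rewrite /Rabs; case: Rcase_abs; lra.
    move=> /(Rmult_lt_compat_l (c_q q) _ _ Hc).
    by rewrite (_ : c_q q * (1 - eps / c_q q) = c_q q - eps) //; field; lra. }
  case: (lower_bound N q Omega u Du D2u Dtu Hq Hpos HC Hpde Rb (1 - et) et HRb ltac:(lra) ltac:(lra) Hlarge)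
    => delta [Hdelta Hlow].
  exists delta; split=> // x0 t Hball Ht.
  have := Rmult_le_compat_l (Rpower t (a_q q)) _ _ (Rlt_le _ _ (Rpower_pos t (a_q q))) (Hlow x0 t Hball Ht).
  rewrite -Rmult_assoc (Rmult_comm _ (1 - et)) Rmult_assoc psi_self_similar; [|lra | lra].
  rewrite /f in Hmain; lra.
Qed.
End Limits.

Lemma ball_compact N (x0 : point N) r : is_compact (fun y => dist x0 y <= r).
Proof.
  split; last by exists x0, r.
  move=> y Hy; apply: Rnot_lt_le => Hout.
  case: (Hy (dist x0 y - r)) => [|z [Hz Hyz]]; first lra.
  have := dist_triang _ x0 z y; rewrite (dist_sym _ z y); lra.
Qed.

Lemma large_on_balls N q (Omega : point N -> Prop) u : large_initial_solution q Omega u ->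
  forall (x0 : point N) r M, (forall y, dist x0 y <= r -> Omega y) ->
    exists delta, delta > 0 /\ forall x s, dist x0 x <= r -> 0 < s < delta -> M < u x s.
Proof. by move=> [_ Hlarge] x0 r M Hball; apply: (Hlarge _ (ball_compact N x0 r) Hball M). Qed.

(* Lebesgue number: if [closure G] is a bounded subset of the open set [Omega], the
   closed balls of some fixed radius centred in [G] lie in [Omega]. *)
Lemma uniform_ball_radius N (Omega G : point N -> Prop) : is_open Omega -> is_bounded G ->
  (forall x, closure G x -> Omega x) ->
  exists Rb, 0 < Rb /\ forall x0, G x0 -> forall y, dist x0 y <= Rb -> Omega y.
Proof.
  move=> Hop [c [M HM]] Hcl; apply: NNPP => Hno.
  have Hbad : forall n : nat, exists p : point N * point N,
      G (fst p) /\ dist (fst p) (snd p) <= / (INR n + 1) /\ ~ Omega (snd p).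
  { move=> n; apply: NNPP => Hn; apply: Hno; exists (/ (INR n + 1)); split.
      by apply: Rinv_0_lt_compat; have := pos_INR n; lra.
    move=> x0 Hx0 y Hy; apply: NNPP => Hy'; apply: Hn; by exists (x0, y). }
  case: (choice _ Hbad) => p Hp.
  case: (bounded_cluster N c M 0 0 (fun n => fst (p n)) (fun _ => 0)) => [n|n|x [s Hcx]].
  - by apply: HM; case: (Hp n).
  - lra.
  have HclG : closure G x.
  { move=> e He; case: (Hcx e O He) => n [_ [Hn _]].
    by exists (fst (p n)); split; [case: (Hp n) | rewrite dist_sym]. }
  case: (Hop x (Hcl x HclG)) => r0 [Hr0 Hball].
  case: (small_inv (r0 / 2)) => [|n1 Hn1]; first lra.
  case: (Hcx (r0 / 2) n1) => [|n [Hn [Hxn _]]]; first lra.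
  case: (Hp n) => [_ [Hnear Hout]]; apply: Hout; apply: Hball.
  rewrite dist_sym in Hxn; have := Hn1 n Hn; have := dist_triang _ x (fst (p n)) (snd (p n)); lra.
Qed.

Theorem lemma3p2 (N : nat) (q : R) (Omega : point N -> Prop) (u : point N -> R -> R) :
  1 < q -> is_domain Omega -> large_initial_solution q Omega u ->
  forall G : point N -> Prop, is_open G -> is_bounded G ->
    (forall x, closure G x -> Omega x) ->
    forall eps, eps > 0 -> exists delta, delta > 0 /\
      forall x t, G x -> 0 < t < delta ->
        Rabs (Rpower t (1 / (q - 1)) * u x t - c_q q) < eps.
Proof.
  move=> Hq [_ [Hop _]] Hlarge G _ HGb HGcl eps Heps.
  have Hballs := large_on_balls N q Omega u Hlarge.
  case: Hlarge => [[Hpos [Du [D2u [Dtu [HC Hpde]]]]] _].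
  case: (uniform_ball_radius N Omega G Hop HGb HGcl) => Rb [HRb Hball].
  case: (upper_limit N q Omega u Du D2u Dtu Hq HC Hpde Rb HRb eps Heps) => d1 [Hd1 Hup].
  case: (lower_limit N q Omega u Du D2u Dtu Hq Hpos HC Hpde Rb HRb eps Heps Hballs) => d2 [Hd2 Hlow].
  exists (Rmin d1 d2); split; first exact: Rmin_pos.
  move=> x t Hx Ht; have := Rmin_l d1 d2; have := Rmin_r d1 d2 => ? ?.
  have := Hup x t (Hball x Hx) ltac:(lra); have := Hlow x t (Hball x Hx) ltac:(lra).
  rewrite -/(a_q q) /Rabs; case: Rcase_abs; lra.
Qed.
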